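(* For each partial computable function $f:\mathbb{N}\to\mathbb{N}$ there exists a constant $c_f$ such that for all $n$ in the domain of $f$, $\alpha(\alpha(f(n)))\le \alpha(n)+c_f$.
   Context: Natural numbers are identified with finite binary strings. $\mathrm{K}$ denotes prefix-free Kolmogorov complexity with respect to a fixed optimal prefix-free machine $\mathbb{U}'$: $\mathrm{K}(x)=\min\{|y|:\mathbb{U}'(y)=x\}$, where $\mathbb{U}'$ has prefix-free domain and for every prefix-free machine $T$ there is $c_T$ with $\mathrm{K}(x)\le \min\{|y|:T(y)=x\}+c_T$. Solovay's $\alpha$-function is $\alpha(n)=\min\{\mathrm{K}(i) : i>n\}$. *)

From mathcomp Require Import all_boot.
From Stdlib Require Import ClassicalDescription.

Set Implicit Arguments.
Unset Strict Implicit.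
Unset Printing Implicit Defensive.

Inductive rf : Type :=
| Zero : rf
| Succ : rf
| Proj : nat -> rf
| Comp : rf -> list rf -> rf
| Prec : rf -> rf -> rf
| Mu   : rf -> rf.

Inductive eval : rf -> seq nat -> nat -> Prop :=
| eZero xs : eval Zero xs 0
| eSucc x xs : eval Succ (x :: xs) x.+1
| eProj i xs : i < size xs -> eval (Proj i) xs (nth 0 xs i)
| eComp f gs xs ys y : evals gs xs ys -> eval f ys y -> eval (Comp f gs) xs y
| ePrec0 g h xs y : eval g xs y -> eval (Prec g h) (0 :: xs) y
| ePrecS g h n xs r y :
    eval (Prec g h) (n :: xs) r -> eval h (n :: r :: xs) y ->
    eval (Prec g h) (n.+1 :: xs) y
| eMu f xs n :
    eval f (n :: xs) 0 ->
    (forall m, m < n -> exists k, eval f (m :: xs) k.+1) ->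
    eval (Mu f) xs n
with evals : seq rf -> seq nat -> seq nat -> Prop :=
| evNil xs : evals [::] xs [::]
| evCons g gs xs y ys : eval g xs y -> evals gs xs ys -> evals (g :: gs) xs (y :: ys).

Definition partial_computable (f : nat -> option nat) : Prop :=
  exists p : rf, forall n y, f n = Some y <-> eval p [:: n] y.

(* Natural numbers identified with binary strings: n <-> the binary    *)
(* expansion of n+1 with its leading 1 removed (0 <-> empty string,    *)
(* 1 <-> "0", 2 <-> "1", 3 <-> "00", ...).                             *)

Definition blen (n : nat) : nat := trunc_log 2 n.+1.

(* string x is a (non-strict) prefix of string y: deleting the last k
   bits of y gives x, i.e. (y+1) shifted right by k bits equals x+1. *)
Definition is_prefix (x y : nat) : Prop := exists k, y.+1 %/ 2 ^ k = x.+1.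

Definition prefix_free (T : nat -> option nat) : Prop :=
  forall x y, T x <> None -> T y <> None -> x <> y -> ~ is_prefix x y.

(* least natural number satisfying P (0 if none). *)
Definition minP (P : nat -> Prop) : nat :=
  match excluded_middle_informative (exists k, P k) with
  | left H =>
      @ex_minn (fun k => if excluded_middle_informative (P k) then true else false)
        (let: ex_intro k Hk := H in
         ex_intro _ k (match excluded_middle_informative (P k) as b
                             return (if b then true else false) = true with
                       | left _ => erefl | right nH => False_ind _ (nH Hk) end))
  | right _ => 0
  end.

Definition K (U : nat -> option nat) (x : nat) : nat :=
  minP (fun k => exists y, U y = Some x /\ blen y = k).

Definition optimal_pf_machine (U : nat -> option nat) : Prop :=
  [/\ partial_computable U, prefix_free U &
      forall T : nat -> option nat, partial_computable T -> prefix_free T ->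
        exists c, forall y x, T y = Some x ->
          K U x <= blen y + c].

Definition alpha (U : nat -> option nat) (n : nat) : nat :=
  minP (fun k => exists i, n < i /\ K U i = k).

(* Writing i > n for a witness of alpha(n) = K(i): running the unary code 0^n 1 through f
   gives K(m + 1) <= n + c, hence alpha(m) <= n + c < i + c, and therefore
   alpha(alpha(m)) <= alpha(n + c) <= K(i + c) <= K(i) + c' = alpha(n) + c'.
   The last step needs i to have a description; with the junk value K(x) = 0 for
   undescribed x, either all large numbers are described (small n contribute a
   constant, by monotonicity of alpha) or alpha vanishes identically. *)
From mathcomp Require Import all_boot zify.
From Stdlib Require Import Classical ClassicalDescription.

Set Implicit Arguments.
Unset Strict Implicit.
Unset Printing Implicit Defensive.

Lemma eval_Zero xs v : eval Zero xs v <-> v = 0.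
Proof. by split=> [H|->]; [inversion H | constructor]. Qed.

Lemma eval_Succ x xs v : eval Succ (x :: xs) v <-> v = x.+1.
Proof. by split=> [H|->]; [inversion H | constructor]. Qed.

Lemma eval_Proj i xs v : i < size xs -> eval (Proj i) xs v <-> v = nth 0 xs i.
Proof. by move=> Hi; split=> [H|->]; [inversion H | constructor]. Qed.

Lemma eval_Comp1 f g xs v :
  eval (Comp f [:: g]) xs v <-> exists a, eval g xs a /\ eval f [:: a] v.
Proof.
split=> [H|[a [Ha Hv]]].
- inversion H as [| | |f' gs xs' ys y Hs Hf| | |]; subst.
  inversion Hs as [|g' gs' xs'' a ys' Ha Hs']; subst.
  by inversion Hs'; subst; exists a.
- by econstructor; [econstructor; [exact: Ha | constructor] | exact: Hv].
Qed.

Lemma eval_Comp2 f g1 g2 xs v :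
  eval (Comp f [:: g1; g2]) xs v <->
  exists a b, [/\ eval g1 xs a, eval g2 xs b & eval f [:: a; b] v].
Proof.
split=> [H|[a [b [Ha Hb Hv]]]].
- inversion H as [| | |f' gs xs' ys y Hs Hf| | |]; subst.
  inversion Hs as [|g' gs' xs'' a ys' Ha Hs']; subst.
  inversion Hs' as [|g'' gs'' xs3 b ys'' Hb Hs'']; subst.
  by inversion Hs''; subst; exists a, b.
- econstructor; last exact: Hv.
  by econstructor; [exact: Ha | econstructor; [exact: Hb | constructor]].
Qed.

Lemma eval_Comp1E {f g xs a w} :
  (forall v, eval g xs v <-> v = a) -> (forall v, eval f [:: a] v <-> v = w) ->
  forall v, eval (Comp f [:: g]) xs v <-> v = w.
Proof.
move=> Hg Hf v; rewrite eval_Comp1; split=> [[a' [/Hg -> /Hf //]]|->].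
by exists a; split; [apply/Hg | apply/Hf].
Qed.

Lemma eval_Comp2E {f g1 g2 xs a b w} :
  (forall v, eval g1 xs v <-> v = a) -> (forall v, eval g2 xs v <-> v = b) ->
  (forall v, eval f [:: a; b] v <-> v = w) ->
  forall v, eval (Comp f [:: g1; g2]) xs v <-> v = w.
Proof.
move=> Hg1 Hg2 Hf v; rewrite eval_Comp2.
split=> [[a' [b' [/Hg1 -> /Hg2 -> /Hf //]]]|->].
by exists a, b; split; [apply/Hg1 | apply/Hg2 | apply/Hf].
Qed.

Fixpoint prec_iter (z : nat) (s : nat -> nat -> nat) (n : nat) : nat :=
  if n is n'.+1 then s n' (prec_iter z s n') else z.

Lemma eval_Prec g h xs z s :
  (forall v, eval g xs v <-> v = z) ->
  (forall n r v, eval h (n :: r :: xs) v <-> v = s n r) ->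
  forall n v, eval (Prec g h) (n :: xs) v <-> v = prec_iter z s n.
Proof.
move=> Hg Hh; elim=> [|n IH] v /=; split=> [E|->].
- by inversion E as [| | | |g' h' xs' y Hy| |]; subst; apply/Hg.
- by constructor; apply/Hg.
- inversion E as [| | | | |g' h' n' xs' r y Hr Hy|]; subst.
  by move/IH: Hr => Hr; subst; apply/Hh.
- by econstructor; [apply/IH | apply/Hh].
Qed.

Definition padd := Prec (Proj 0) (Comp Succ [:: Proj 1]).

Lemma eval_add a b v : eval padd [:: a; b] v <-> v = a + b.
Proof.
have -> : a + b = prec_iter b (fun _ r => r.+1) a by elim: a => //= a <-.
apply: eval_Prec => [w|n r]; first exact: eval_Proj.
by apply: (eval_Comp1E (a := r)) => w; [apply: eval_Proj | apply: eval_Succ].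
Qed.

Definition ppred := Prec Zero (Proj 0).

Lemma eval_pred a xs v : eval ppred (a :: xs) v <-> v = a.-1.
Proof.
have -> : a.-1 = prec_iter 0 (fun n _ => n) a by case: a.
by apply: eval_Prec => [w|n r w]; [apply: eval_Zero | apply: eval_Proj].
Qed.

(* Note the argument order: [psub] maps [b; a] to [a - b]. *)
Definition psub := Prec (Proj 0) (Comp ppred [:: Proj 1]).

Lemma eval_sub b a v : eval psub [:: b; a] v <-> v = a - b.
Proof.
have -> : a - b = prec_iter a (fun _ r => r.-1) b.
  by elim: b => [|b IH] /=; rewrite ?subn0 // subnS IH.
apply: eval_Prec => [w|n r]; first exact: eval_Proj.
by apply: (eval_Comp1E (a := r)) => w; [apply: eval_Proj | apply: eval_pred].
Qed.

Definition pdist :=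
  Comp padd [:: Comp psub [:: Proj 1; Proj 0]; Comp psub [:: Proj 0; Proj 1]].

Lemma eval_dist a b v : eval pdist [:: a; b] v <-> v = (a - b) + (b - a).
Proof.
apply: (eval_Comp2E (a := a - b) (b := b - a)) => [w|w|w]; last exact: eval_add.
- by apply: (eval_Comp2E (a := b) (b := a)) => u; [apply: eval_Proj.. | apply: eval_sub].
- by apply: (eval_Comp2E (a := a) (b := b)) => u; [apply: eval_Proj.. | apply: eval_sub].
Qed.

Lemma dist_eq0 a b : ((a - b) + (b - a) == 0) = (a == b).
Proof. by rewrite addn_eq0 !subn_eq0 eqn_leq. Qed.

Definition ppow2 :=
  Prec (Comp Succ [:: Comp Succ [:: Zero]]) (Comp padd [:: Proj 1; Proj 1]).

Lemma eval_pow2 x xs v : eval ppow2 (x :: xs) v <-> v = 2 ^ x.+1.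
Proof.
have -> : 2 ^ x.+1 = prec_iter 2 (fun _ r => r + r) x.
  by elim: x => //= x <-; rewrite expnS mul2n addnn.
apply: eval_Prec => [w|n r w].
- apply: (eval_Comp1E (a := 1)) => {}w; last exact: eval_Succ.
  by apply: (eval_Comp1E (a := 0)) => {}w; [apply: eval_Zero | apply: eval_Succ].
- by apply: (eval_Comp2E (a := r) (b := r)) => u; [apply: eval_Proj.. | apply: eval_add].
Qed.

(* Decoder of the unary code [2 ^ x.+1], i.e. of the string [0^x 1]. *)
Definition punary := Mu (Comp pdist [:: ppow2; Proj 1]).

Lemma eval_unary y v : eval punary [:: y] v <-> y = 2 ^ v.+1.
Proof.
have Htest x z w : eval (Comp pdist [:: ppow2; Proj 1]) [:: x; z] w <->
                   w = (2 ^ x.+1 - z) + (z - 2 ^ x.+1).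
  apply: (eval_Comp2E (a := 2 ^ x.+1) (b := z)) => {}w;
    [exact: eval_pow2 | exact: eval_Proj | exact: eval_dist].
split=> [H|->].
- inversion H as [| | | | | |f xs n Hzero _]; subst.
  by move/Htest/esym/eqP: Hzero; rewrite dist_eq0 => /eqP.
- constructor; first by apply/Htest; rewrite subnn.
  move=> m Hm; exists ((2 ^ m.+1 - 2 ^ v.+1) + (2 ^ v.+1 - 2 ^ m.+1)).-1.
  apply/Htest; rewrite prednK // lt0n dist_eq0.
  by rewrite eqn_exp2l // eqSS ltn_eqF.
Qed.

Definition padd_const (d : nat) : rf := iter d (fun p => Comp Succ [:: p]) (Proj 0).

Lemma eval_add_const d x v : eval (padd_const d) [:: x] v <-> v = x + d.
Proof.
elim: d v => [|d IH] v; first by rewrite addn0; apply: eval_Proj.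
rewrite addnS; apply: (eval_Comp1E (a := x + d)) v => v; first exact: IH.
exact: eval_Succ.
Qed.

Lemma partial_computable_obind {g h : nat -> option nat} :
  partial_computable g -> partial_computable h ->
  partial_computable (fun x => obind h (g x)).
Proof.
move=> [pg Hg] [ph Hh]; exists (Comp ph [:: pg]) => n y; rewrite eval_Comp1.
case E: (g n) => [x|] /=.
- rewrite Hh; split=> [Hx|[a [/Hg Ea Ha]]]; first by exists x; rewrite -Hg.
  by move: E Ea => -> [->].
- by split=> // -[a [/Hg]]; rewrite E.
Qed.

Lemma partial_computable_addn d : partial_computable (fun x => Some (x + d)).
Proof. by exists (padd_const d) => n y; rewrite eval_add_const; split=> [[<-]|->]. Qed.

Lemma prefix_free_obind (T g : nat -> option nat) :
  prefix_free T -> prefix_free (fun y => obind g (T y)).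
Proof. by move=> HT x y Hx Hy; apply: HT; [move: Hx | move: Hy]; case: (T _). Qed.

Definition unary_decode (y : nat) : option nat :=
  if (1 < y) && (2 ^ trunc_log 2 y == y) then Some (trunc_log 2 y).-1 else None.

Lemma unary_decodeE y x : unary_decode y = Some x <-> y = 2 ^ x.+1.
Proof.
rewrite /unary_decode; split.
- case: ifP => // /andP [Hy /eqP Hlog] [<-].
  by case: (trunc_log 2 y) Hlog => [|t] Hlog; [move: Hy; rewrite -Hlog | rewrite -Hlog].
- move=> ->; rewrite trunc_expnK // eqxx /=.
  by rewrite (@ltn_exp2l 2 0 x.+1).
Qed.

Lemma partial_computable_unary_decode : partial_computable unary_decode.
Proof. by exists punary => n y; rewrite unary_decodeE eval_unary. Qed.

Lemma blen_pow2 x : blen (2 ^ x.+1) = x.+1.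
Proof.
rewrite /blen; apply: trunc_log_eq => //.
rewrite leqnSn /= (expnS 2 x.+1).
have : 1 < 2 ^ x.+1 by rewrite (@ltn_exp2l 2 0 x.+1).
move: (2 ^ x.+1) => t; lia.
Qed.

Lemma pow2_not_prefix a b : a <> b -> ~ is_prefix (2 ^ a.+1) (2 ^ b.+1).
Proof.
move=> nab [[|k] Hk].
  by move: Hk; rewrite expn0 divn1 => -[] /eqP; rewrite eqn_exp2l // eqSS => /eqP /esym.
have H1 : 1 %/ 2 ^ k.+1 = 0 by rewrite divn_small // (@ltn_exp2l 2 0 k.+1).
case: (leqP k.+1 b.+1) => Hkb.
- have E : 2 ^ b.+1 = 2 ^ (b.+1 - k.+1) * 2 ^ k.+1 by rewrite -expnD subnK.
  move: Hk; rewrite E -addn1 divnMDl ?expn_gt0 // H1 addn0.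
  case: (b.+1 - k.+1) => [|j]; first by rewrite expn0 => /eqP; rewrite eqSS eq_sym expn_eq0.
  by move=> /(congr1 odd); rewrite /= !oddX.
- move: Hk; rewrite divn_small // -addn1.
  apply: (@leq_trans (2 ^ b.+1 * 2)).
    by rewrite muln2 -addnn ltn_add2l (@ltn_exp2l 2 0 b.+1).
  by rewrite -expnSr leq_exp2l.
Qed.

Lemma prefix_free_unary_decode : prefix_free unary_decode.
Proof.
move=> x y Hx Hy nxy.
case Ex: (unary_decode x) Hx => [a|] // _; case Ey: (unary_decode y) Hy => [b|] // _.
move/unary_decodeE: Ex => Ex; move/unary_decodeE: Ey => Ey; subst.
by apply: pow2_not_prefix => Eab; apply: nxy; rewrite Eab.
Qed.

Lemma minP_le (P : nat -> Prop) k : P k -> minP P <= k.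
Proof.
move=> Hk; rewrite /minP; case: excluded_middle_informative => // H.
case: ex_minnP => m _; apply.
by case: excluded_middle_informative.
Qed.

Lemma minP_spec (P : nat -> Prop) : (exists k, P k) -> P (minP P).
Proof.
move=> Hex; rewrite /minP; case: excluded_middle_informative => // H.
by case: ex_minnP => m; case: excluded_middle_informative.
Qed.

Lemma minP_none (P : nat -> Prop) : ~ (exists k, P k) -> minP P = 0.
Proof. by move=> nH; rewrite /minP; case: excluded_middle_informative. Qed.

Definition described (U : nat -> option nat) (x : nat) : Prop := exists y, U y = Some x.

Lemma K_spec U x : described U x -> exists y, U y = Some x /\ blen y = K U x.
Proof.
move=> [y Hy]; apply: (@minP_spec (fun k => exists y, U y = Some x /\ blen y = k)).
by exists (blen y), y.
Qed.

Lemma K_undescribed U x : ~ described U x -> K U x = 0.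
Proof. by move=> nH; apply: minP_none => -[k [y [Hy _]]]; apply: nH; exists y. Qed.

Lemma alpha_le U n i : n < i -> alpha U n <= K U i.
Proof. by move=> H; apply: minP_le; exists i. Qed.

Lemma alpha_spec U n : exists i, n < i /\ K U i = alpha U n.
Proof.
apply: (@minP_spec (fun k => exists i, n < i /\ K U i = k)).
by exists (K U n.+1), n.+1.
Qed.

Lemma alpha_monotone U : {homo alpha U : x y / x <= y}.
Proof.
move=> x y Hxy; have [i [Hyi <-]] := alpha_spec U y.
exact/alpha_le/(leq_ltn_trans Hxy).
Qed.

Lemma alpha_eq0 U n :
  ~ (exists N, forall x, N < x -> described U x) -> alpha U n = 0.
Proof.
move=> Hinf; apply/eqP; rewrite -leqn0.
have [j [Hnj Hj]] : exists j, n < j /\ ~ described U j.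
  apply: NNPP => H; apply: Hinf; exists n => x Hx.
  by apply: NNPP => nx; apply: H; exists x.
by rewrite -(@K_undescribed U j Hj); apply: alpha_le.
Qed.

Section OptimalMachine.

Variable U : nat -> option nat.
Hypothesis HU : optimal_pf_machine U.

Lemma K_obind_le {T g : nat -> option nat} :
  partial_computable T -> prefix_free T -> partial_computable g ->
  exists c, forall q x y, T q = Some x -> g x = Some y -> K U y <= blen q + c.
Proof.
case: HU => _ _ opt HT HTpf Hg.
have [c Hc] := opt _ (partial_computable_obind HT Hg) (prefix_free_obind (g := g) HTpf).
by exists c => q x y Hq Hx; apply: Hc; rewrite Hq.
Qed.

Lemma K_map_le {g : nat -> option nat} : partial_computable g ->
  exists c, forall x y, described U x -> g x = Some y -> K U y <= K U x + c.
Proof.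
case: (HU) => HUc HUpf _ Hg.
have [c Hc] := K_obind_le HUc HUpf Hg.
exists c => x y /K_spec [q [Hq <-]]; exact: Hc.
Qed.

Lemma K_map_unary_le {g : nat -> option nat} : partial_computable g ->
  exists c, forall n y, g n = Some y -> K U y <= n + c.
Proof.
move=> Hg.
have [c Hc] :=
  K_obind_le partial_computable_unary_decode prefix_free_unary_decode Hg.
exists c.+1 => n y Hy; rewrite addnS -addSn -(blen_pow2 n).
by apply: Hc Hy; apply/unary_decodeE.
Qed.

Lemma alpha_map_le {f : nat -> option nat} : partial_computable f ->
  exists c, forall n m, f n = Some m -> alpha U m <= n + c.
Proof.
move=> Hf.
have [c Hc] := K_map_unary_le (partial_computable_obind Hf (partial_computable_addn 1)).
exists c => n m Hnm; apply: (leq_trans (alpha_le U (ltnSn m))).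
by apply: Hc; rewrite Hnm /= addn1.
Qed.

End OptimalMachine.

Theorem lemma2 (U : nat -> option nat) (HU : optimal_pf_machine U)
  (f : nat -> option nat) (Hf : partial_computable f) :
  exists c : nat, forall n m : nat, f n = Some m ->
    alpha U (alpha U m) <= alpha U n + c.
Proof.
have [ca Hca] := alpha_map_le HU Hf.
have [cs Hcs] := K_map_le HU (partial_computable_addn ca).
case: (classic (exists N, forall x, N < x -> described U x)) => [[N HN]|Hinf]; last first.
  by exists 0 => n m _; rewrite !(alpha_eq0 _ Hinf).
exists (alpha U (N + ca) + cs) => n m Hnm.
apply: leq_trans (alpha_monotone U (Hca _ _ Hnm)) _.
case: (leqP n N) => [HnN|HNn].
  have : alpha U (n + ca) <= alpha U (N + ca) by apply/alpha_monotone; rewrite leq_add2r.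
  lia.
have [i [Hni <-]] := alpha_spec U n.
have Hshift : K U (i + ca) <= K U i + cs := Hcs _ _ (HN _ (ltn_trans HNn Hni)) erefl.
have Hi : alpha U (n + ca) <= K U (i + ca) by apply: alpha_le; rewrite ltn_add2r.
by apply: leq_trans (leq_trans Hi Hshift) _; rewrite leq_add2l leq_addl.
Qed.
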